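(* Let $G=(\mathcal{N},\mathcal{A})$ be a directed graph with $m$ nodes and $n$ arcs, start node $s$ and end node $t$, let $\mathbf{A}\in\mathbb{R}^{(m-1)\times n}$ be its node–arc incidence matrix with the row of $t$ deleted, and let $\mathbf{b}\in\mathbb{R}^{m-1}$ have entry $+1$ at $s$ and $0$ elsewhere. Let $\hat{\mathbf{x}}^r_1,\dots,\hat{\mathbf{x}}^r_R$ satisfy $\mathbf{A}\hat{\mathbf{x}}^r_q=\mathbf{b}$, $\hat{\mathbf{x}}^r_q\ge\mathbf{0}$. Let $(\mathbf{c}^*,\mathbf{p}^*,\boldsymbol{\epsilon}^{*})$ be an optimal solution of $$\min_{\mathbf{c},\mathbf{p},\boldsymbol{\epsilon}}\ \sum_{q=1}^R \epsilon_q^2\quad\text{s.t.}\quad \mathbf{A}^\top\mathbf{p}\le \mathbf{c},\quad \mathbf{c}^\top\hat{\mathbf{x}}^r_q=\mathbf{b}^\top\mathbf{p}+\epsilon_q\ (q=1,\dots,R),\quad \|\mathbf{c}\|_\infty=1,\quad \mathbf{A}\mathbf{c}=\mathbf{0}.$$ Then the network $G$ with arc costs $\mathbf{c}^*$ contains no directed cycle of negative total cost.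
   Context: In the incidence matrix, the column of arc $(i,j)$ has $+1$ in row $i$ and $-1$ in row $j$ (rows other than $t$). The forward problem is $\min\{\mathbf{c}^\top\mathbf{x}:\mathbf{A}\mathbf{x}=\mathbf{b},\ \mathbf{x}\ge\mathbf{0}\}$, and $\mathbf{p}$ is the dual vector of its flow-balance constraints. *)

From HB Require Import structures.
From mathcomp Require Import all_boot all_order all_algebra.
Unset Printing Implicit Defensive.
Import Order.TTheory GRing.Theory Num.Theory.
Local Open Scope ring_scope.

(* A directed graph with node set 'I_m and arc set 'I_n; arc a goes from
   node (tl a) to node (hd a). *)

Definition rows {m : nat} (t : 'I_m) := {i : 'I_m | i != t}.

Section Network.
Variables (R : realFieldType) (m n : nat) (tl hd : 'I_n -> 'I_m).

Definition inc (i : 'I_m) (a : 'I_n) : R :=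
  (tl a == i)%:R - (hd a == i)%:R.

Definition incA {t : 'I_m} (i : rows t) (a : 'I_n) : R := inc (val i) a.

Definition bvec (s : 'I_m) {t : 'I_m} (i : rows t) : R := (val i == s)%:R.

Definition flow_feasible (s t : 'I_m) (x : 'I_n -> R) : Prop :=
  (forall i : rows t, \sum_(a < n) incA i a * x a = bvec s i) /\
  (forall a, 0 <= x a).

Definition inf_norm (c : 'I_n -> R) : R := \big[Num.max/0]_(a < n) `|c a|.

Definition io_feasible (s t : 'I_m) (Q : nat) (xhat : 'I_Q -> 'I_n -> R)
    (c : 'I_n -> R) (p : rows t -> R) (eps : 'I_Q -> R) : Prop :=
  [/\ (forall a : 'I_n, \sum_(i : rows t) incA i a * p i <= c a),
      (forall q : 'I_Q, \sum_(a < n) c a * xhat q a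
                        = \sum_(i : rows t) bvec s i * p i + eps q),
      inf_norm c = 1 &
      (forall i : rows t, \sum_(a < n) incA i a * c a = 0)].

Definition io_optimal (s t : 'I_m) (Q : nat) (xhat : 'I_Q -> 'I_n -> R)
    (c : 'I_n -> R) (p : rows t -> R) (eps : 'I_Q -> R) : Prop :=
  io_feasible s t Q xhat c p eps /\
  forall c' p' eps', io_feasible s t Q xhat c' p' eps' ->
    \sum_(q < Q) eps q ^+ 2 <= \sum_(q < Q) eps' q ^+ 2.

Definition dcycle (cyc : seq 'I_n) : bool :=
  if cyc is a :: rest then
    [&& path [rel x y | hd x == tl y] a rest,
        hd (last a rest) == tl a &
        uniq (map tl cyc)]
  else false.

Definition cycle_cost (c : 'I_n -> R) (cyc : seq 'I_n) : R :=
  \sum_(a <- cyc) c a.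

Definition no_negative_cycle (c : 'I_n -> R) : Prop :=
  forall cyc, dcycle cyc -> 0 <= cycle_cost c cyc.

End Network.

From HB Require Import structures.
From mathcomp Require Import all_boot all_order all_algebra.
Import Order.TTheory GRing.Theory Num.Theory.
Local Open Scope ring_scope.

(* Extend the dual vector p* by 0 at the deleted node t to a node potential pi.
   The dual constraint A^T p* <= c* then says c*_a >= pi(tail a) - pi(head a)
   for every arc a, and along a directed cycle these potential differences
   telescope to 0, so every cycle has nonnegative c*-cost. *)

Section ZeroExtension.
Variables (R : pzRingType) (m : nat) (t : 'I_m).

Definition zero_extend (p : rows t -> R) (j : 'I_m) : R :=
  if insub j is Some i then p i else 0.

Lemma sum_rows_eq_mul (p : rows t -> R) (j : 'I_m) :
  \sum_(i : rows t) (j == val i)%:R * p i = zero_extend p j.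
Proof.
rewrite /zero_extend; case: insubP => [i _ <-|j_eq_t].
  rewrite (bigD1 i) //= eqxx mul1r big1 ?addr0 // => k k_neq_i.
  by rewrite eq_sym (inj_eq val_inj) (negbTE k_neq_i) mul0r.
rewrite big1 // => k _; case: eqP => [j_eq_k|]; last by rewrite mul0r.
by move: j_eq_t (valP k); rewrite j_eq_k => /negbNE ->.
Qed.

End ZeroExtension.

Arguments zero_extend {R m t} p j.
Arguments sum_rows_eq_mul {R m t} p j.

Section ArcPaths.
Variables (V : zmodType) (m n : nat) (tl hd : 'I_n -> 'I_m) (f : 'I_m -> V).

Lemma telescope_arc_path a rest :
  path [rel x y | hd x == tl y] a rest ->
  \sum_(x <- a :: rest) (f (tl x) - f (hd x)) = f (tl a) - f (hd (last a rest)).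
Proof.
elim: rest a => [|b rest IHrest] a /=; first by rewrite big_seq1.
case/andP => /eqP hd_a_tl_b path_b.
by rewrite big_cons IHrest // -hd_a_tl_b addrA subrK.
Qed.

Lemma dcycle_potential_diff_sum0 cyc :
  dcycle m n tl hd cyc -> \sum_(x <- cyc) (f (tl x) - f (hd x)) = 0.
Proof.
case: cyc => [|a rest] //= /and3P [path_rest /eqP closed _].
by rewrite telescope_arc_path // closed subrr.
Qed.

End ArcPaths.

Arguments dcycle_potential_diff_sum0 {V m n tl hd} f {cyc}.

Section Potentials.
Variables (R : realFieldType) (m n : nat) (tl hd : 'I_n -> 'I_m).

Lemma sum_incA_mul (t : 'I_m) (p : rows t -> R) (a : 'I_n) :
  \sum_(i : rows t) incA R m n tl hd i a * p i
    = zero_extend p (tl a) - zero_extend p (hd a).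
Proof.
rewrite -!sum_rows_eq_mul -sumrB; apply: eq_bigr => i _.
by rewrite /incA /inc mulrBl.
Qed.

Lemma potential_no_negative_cycle (pi : 'I_m -> R) (c : 'I_n -> R) :
  (forall a, pi (tl a) - pi (hd a) <= c a) -> no_negative_cycle R m n tl hd c.
Proof.
move=> reduced_cost_ge0 cyc cyc_dcycle.
rewrite -(dcycle_potential_diff_sum0 pi cyc_dcycle).
by apply: ler_sum => a _; apply: reduced_cost_ge0.
Qed.

End Potentials.

Arguments potential_no_negative_cycle {R m n tl hd} pi {c}.

Theorem proposition1 (R : realFieldType) (m n : nat)
    (tl hd : 'I_n -> 'I_m) (s t : 'I_m) (hst : s != t)
    (Q : nat) (xhat : 'I_Q -> 'I_n -> R)
    (hx : forall q, flow_feasible R m n tl hd s t (xhat q))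
    (cstar : 'I_n -> R) (pstar : rows t -> R) (epsstar : 'I_Q -> R)
    (hopt : io_optimal R m n tl hd s t Q xhat cstar pstar epsstar) :
  no_negative_cycle R m n tl hd cstar.
Proof.
case: hopt => [[dual_feasible _ _ _] _].
apply: (potential_no_negative_cycle (zero_extend pstar)) => a.
by rewrite -sum_incA_mul; apply: dual_feasible.
Qed.
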